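(* Let $P\subset\mathbb Z^n_+$ be a discrete polymatroid and $\alpha=(k_1,\ldots,k_n)\in\mathbb N^n$. Let $\gamma:S_{P^\alpha}\to S_P$ be the $K$-algebra homomorphism with $\gamma(y_{\mathbf u})=y_{\pi_0(\mathbf u)}$ for $\mathbf u\in\mathcal B_{P^\alpha}$. Then $\gamma(I_{P^\alpha})=I_P$.
   Context: $K$ is a field, $\mathbb N$ the positive integers, $\mathbb Z^n_+$ the nonnegative integer vectors; $\mathbf u\preceq\mathbf v$ means componentwise $\le$, $\epsilon_i$ is the $i$th unit vector, $|\mathbf u|=\sum_i\mathbf u(i)$. A discrete polymatroid on $[n]$ is a nonempty finite set $P\subset\mathbb Z^n_+$ such that (D1) if $\mathbf v\in\mathbb Z^n_+$, $\mathbf v\preceq\mathbf u$ for some $\mathbf u\in P$, then $\mathbf v\in P$; (D2) if $\mathbf u,\mathbf v\in P$ with $|\mathbf u|<|\mathbf v|$ then there is $i$ with $\mathbf u(i)<\mathbf v(i)$ and $\mathbf u+\epsilon_i\in P$. A base of $P$ is a $\preceq$-maximal element; $\mathcal B_P$ is the set of bases. $S_P=K[y_{\mathbf u}:\mathbf u\in\mathcal B_P]$, $K[P]=K[\mathbf x^{\mathbf u}:\mathbf u\in\mathcal B_P]\subset K[x_1,\ldots,x_n]$ with $\mathbf x^{\mathbf u}=x_1^{\mathbf u(1)}\cdots x_n^{\mathbf u(n)}$, and $I_P$ is the kernel of $S_P\to K[P]$, $y_{\mathbf u}\mapsto\mathbf x^{\mathbf u}$. For $\alpha=(k_1,\ldots,k_n)$,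 index the coordinates of $\mathbb Z^{|\alpha|}$, $|\alpha|=k_1+\cdots+k_n$, by pairs $(i,j)$, $1\le i\le n$, $1\le j\le k_i$, and let $\pi_0:\mathbb Z^{|\alpha|}\to\mathbb Z^n$, $\pi_0(\mathbf w)(i)=\sum_{j=1}^{k_i}\mathbf w(i,j)$. For $\mathbf u\in\mathbb Z^n_+$ let $\mathbf u^\alpha=\{\mathbf w\in\mathbb Z^{|\alpha|}_+:\pi_0(\mathbf w)=\mathbf u\}$. $P^\alpha\subset\mathbb Z^{|\alpha|}_+$ is the discrete polymatroid whose set of bases is $\mathcal B_{P^\alpha}=\bigcup_{\mathbf u\in\mathcal B_P}\mathbf u^\alpha$; $S_{P^\alpha}$, $K[P^\alpha]$, $I_{P^\alpha}$ are defined analogously (in variables $x_{ij}$). *)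

From HB Require Import structures.
From mathcomp Require Import all_boot all_order all_algebra.
From mathcomp Require Import finmap.
From mathcomp Require Import mpoly.

Set Implicit Arguments.
Unset Strict Implicit.
Unset Printing Implicit Defensive.

Import GRing.Theory.
Local Open Scope fset_scope.
Local Open Scope ring_scope.

(* Vectors of Z^n_+ are represented by multinomials 'X_{1..n}; u i is the
   i-th coordinate, (u <= v)%MM is the componentwise order, U_(i)%MM the
   i-th unit vector, mdeg u = |u|. *)

Definition is_discrete_polymatroid n (P : {fset 'X_{1..n}}) : Prop :=
  [/\ P != fset0,
      (forall u v : 'X_{1..n}, u \in P -> lem v u -> v \in P) &
      (forall u v : 'X_{1..n}, u \in P -> v \in P -> (mdeg u < mdeg v)%N ->
         exists i : 'I_n, (u i < v i)%N /\ (u + U_(i))%MM \in P)].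

Definition bases n (P : {fset 'X_{1..n}}) : {fset 'X_{1..n}} :=
  [fset u in P | all (fun v => lem u v ==> (v == u)) (enum_fset P)].

(* Variable number j of K[y_0,...,y_{m-1}] (0 if j >= m). *)
Definition yvar (K : comNzRingType) m (j : nat) : {mpoly K[m]} :=
  if @insub nat (fun j => j < m)%N 'I_m j is Some i then 'X_i else 0.

(* Given an enumeration B of a finite set of vectors in Z^d_+, the polynomial
   ring S_B has variables y_0..y_{size B - 1}, y_t standing for y_{B_t}.
   toric_hom B : S_B -> K[x_1..x_d], y_t |-> x^{B_t}; its kernel is the
   toric ideal. *)
Definition toric_hom (K : comNzRingType) d (B : seq 'X_{1..d})
    (p : {mpoly K[size B]}) : {mpoly K[d]} :=
  p \mPo [tuple 'X_[nth 0%MM B i] | i < size B].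
Arguments toric_hom {K d} B p.

Definition toric_ideal (K : comNzRingType) d (B : seq 'X_{1..d})
    (p : {mpoly K[size B]}) : Prop := toric_hom B p = 0.
Arguments toric_ideal {K d} B p.

(* S_P, K[P], I_P for a discrete polymatroid P use the enumeration of B_P. *)
Definition basis_seq n (P : {fset 'X_{1..n}}) : seq 'X_{1..n} :=
  enum_fset (bases P).

(* alpha = (k_1,...,k_n); |alpha| = \sum k_i.  The coordinates of Z^|alpha|
   are the pairs (i,j), 1 <= j <= k_i, listed lexicographically: the pair
   (i,j) is coordinate number  offset i + (j-1)  in 'I_|alpha|. *)
Definition asize n (k : 'I_n -> nat) : nat := (\sum_(i < n) k i)%N.

Definition offset n (k : 'I_n -> nat) (i : 'I_n) : nat :=
  (\sum_(i' < n | (i' < i)%N) k i')%N.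

Definition in_block n (k : 'I_n -> nat) (i : 'I_n) (t : nat) : bool :=
  (offset k i <= t < offset k i + k i)%N.

Definition pi0 n (k : 'I_n -> nat) (w : 'X_{1..asize k}) : 'X_{1..n} :=
  [multinom (\sum_(t < asize k | in_block k i t) w t)%N | i < n].
Arguments pi0 {n} k w.

(* Bases of P^alpha: all w in Z^|alpha|_+ with pi_0 w in B_P.  Since pi_0
   preserves |.|, they all have degree < D := 1 + max degree of a base. *)
Definition alpha_bound n (P : {fset 'X_{1..n}}) : nat :=
  (\max_(u <- basis_seq P) mdeg u).+1.

Definition bases_alpha n (P : {fset 'X_{1..n}}) (k : 'I_n -> nat)
    : {fset 'X_{1..asize k}} :=
  [fset bmnm w | w in [pred w : bmultinom (asize k) (alpha_bound P) |
                       pi0 k (bmnm w) \in bases P]].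

Definition basis_seq_alpha n (P : {fset 'X_{1..n}}) (k : 'I_n -> nat)
    : seq 'X_{1..asize k} := enum_fset (bases_alpha P k).

Definition gamma (K : comNzRingType) n (P : {fset 'X_{1..n}}) (k : 'I_n -> nat)
    (p : {mpoly K[size (basis_seq_alpha P k)]})
    : {mpoly K[size (basis_seq P)]} :=
  p \mPo [tuple yvar K (size (basis_seq P))
             (index (pi0 k (nth 0%MM (basis_seq_alpha P k) t)) (basis_seq P))
          | t < size (basis_seq_alpha P k)].
Arguments gamma {K n P k} p.

(* γ intertwines the toric maps: the toric map of P after γ equals the toric
   map of P^α followed by the monomial map x_{ij} |-> x_i, which sends x^w to
   x^{π_0 w}.  Hence γ(I_{P^α}) ⊆ I_P.  Conversely, the section σ of π_0 that
   puts all of u(i) on the first coordinate of block i sends bases of P to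
   bases of P^α and is realized by the monomial map x_i |-> x_{i1}; so the
   relabelling y_u |-> y_{σ u} maps I_P into I_{P^α}, and γ undoes it. *)
From mathcomp Require Import all_boot all_algebra.
From mathcomp Require Import finmap.
From mathcomp Require Import mpoly.

Set Implicit Arguments.
Unset Strict Implicit.
Unset Printing Implicit Defensive.

Import GRing.Theory.
Local Open Scope ring_scope.

Lemma comp_mpolyA (K : comNzRingType) a b c (p : {mpoly K[a]})
    (lq : a.-tuple {mpoly K[b]}) (lr : b.-tuple {mpoly K[c]}) :
  (p \mPo lq) \mPo lr = p \mPo [tuple tnth lq i \mPo lr | i < a].
Proof.
rewrite (comp_mpolyEX p lq) (comp_mpolyEX p) raddf_sum; apply: eq_bigr => m _.
rewrite /= comp_mpolyZ !comp_mpolyX rmorph_prod; congr (_ *: _).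
by apply: eq_bigr => i _; rewrite rmorphXn tnth_mktuple.
Qed.

Lemma mpolyX_sum (K : comNzRingType) d (I : finType) (F : I -> 'X_{1..d}) :
  'X_[(\sum_i F i)%MM] = \prod_i ('X_[F i] : {mpoly K[d]}).
Proof. by rewrite (big_morph _ (@mpolyXD _ _) (@mpolyX0 _ _)). Qed.

Lemma comp_mpolyX_monomial (K : comNzRingType) d e (g : 'I_d -> 'X_{1..e})
    (w : 'X_{1..d}) :
  'X_[w] \mPo [tuple ('X_[g t] : {mpoly K[e]}) | t < d]
  = 'X_[(\sum_t g t *+ w t)%MM].
Proof.
rewrite comp_mpolyX mpolyX_sum; apply: eq_bigr => t _.
by rewrite tnth_mktuple mpolyXn.
Qed.

Lemma nth_mktuple_lt (T : Type) (x0 : T) m (F : 'I_m -> T) j (ltjm : (j < m)%N) :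
  nth x0 [tuple F i | i < m] j = F (Ordinal ltjm).
Proof. by rewrite -(tnth_nth x0 _ (Ordinal ltjm)) tnth_mktuple. Qed.

Section Relabel.
Variable K : comNzRingType.

Lemma yvarE m j (ltjm : (j < m)%N) : yvar K m j = 'X_(Ordinal ltjm).
Proof. by rewrite /yvar insubT. Qed.

Lemma yvar_ord m (t : 'I_m) : yvar K m t = 'X_t.
Proof. by rewrite (yvarE (ltn_ord t)); congr 'X_ _; apply: val_inj. Qed.

Lemma comp_mpoly_yvar_index d m (B : seq 'X_{1..d})
    (lq : (size B).-tuple {mpoly K[m]}) (u : 'X_{1..d}) :
  u \in B -> yvar K (size B) (index u B) \mPo lq = lq`_(index u B).
Proof. by rewrite -index_mem => ltuB; rewrite (yvarE ltuB) comp_mpolyXU. Qed.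

Lemma toric_hom_yvar d (B : seq 'X_{1..d}) (u : 'X_{1..d}) :
  u \in B -> toric_hom B (yvar K (size B) (index u B)) = 'X_[u].
Proof.
move=> uB; have ltuB : (index u B < size B)%N by rewrite index_mem.
by rewrite /toric_hom comp_mpoly_yvar_index // (nth_mktuple_lt _ _ ltuB) nth_index.
Qed.

Definition relabel d e (B : seq 'X_{1..d}) (B' : seq 'X_{1..e})
    (f : 'X_{1..d} -> 'X_{1..e}) : (size B).-tuple {mpoly K[size B']} :=
  [tuple yvar K (size B') (index (f (nth 0%MM B t)) B') | t < size B].

Variables (d e : nat) (B : seq 'X_{1..d}) (B' : seq 'X_{1..e}).
Variable f : 'X_{1..d} -> 'X_{1..e}.
Hypothesis f_mem : {in B, forall u, f u \in B'}.

Lemma comp_relabel c (B'' : seq 'X_{1..c}) (g : 'X_{1..e} -> 'X_{1..c})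
    (p : {mpoly K[size B]}) :
  p \mPo relabel B B' f \mPo relabel B' B'' g = p \mPo relabel B B'' (g \o f).
Proof.
rewrite comp_mpolyA; congr (p \mPo _); apply: eq_mktuple => t.
have fBt : f (nth 0%MM B t) \in B' by apply/f_mem/mem_nth.
have ltfB : (index (f (nth 0%MM B t)) B' < size B')%N by rewrite index_mem.
by rewrite !tnth_mktuple comp_mpoly_yvar_index // (nth_mktuple_lt _ _ ltfB) nth_index.
Qed.

Lemma toric_hom_relabel (lx : d.-tuple {mpoly K[e]}) (p : {mpoly K[size B]}) :
    {in B, forall u, 'X_[u] \mPo lx = 'X_[f u]} ->
  toric_hom B' (p \mPo relabel B B' f) = toric_hom B p \mPo lx.
Proof.
move=> lx_f; rewrite /toric_hom !comp_mpolyA; congr (p \mPo _).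
apply: eq_mktuple => t; have Bt : nth 0%MM B t \in B by apply: mem_nth.
by rewrite !tnth_mktuple -/(toric_hom _ _) toric_hom_yvar ?f_mem // lx_f.
Qed.

Lemma toric_ideal_relabel (lx : d.-tuple {mpoly K[e]}) (p : {mpoly K[size B]}) :
    {in B, forall u, 'X_[u] \mPo lx = 'X_[f u]} ->
  toric_ideal B p -> toric_ideal B' (p \mPo relabel B B' f).
Proof.
by move=> lx_f toric_p; rewrite /toric_ideal (toric_hom_relabel _ lx_f) toric_p comp_mpoly0.
Qed.

End Relabel.

Lemma comp_mpoly_relabel_id (K : comNzRingType) d (B : seq 'X_{1..d})
    (f : 'X_{1..d} -> 'X_{1..d}) (p : {mpoly K[size B]}) :
  uniq B -> {in B, f =1 id} -> p \mPo relabel K B B f = p.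
Proof.
move=> uB f_id; rewrite -[RHS]comp_mpoly_id; congr (p \mPo _).
apply: eq_mktuple => t; rewrite f_id ?mem_nth // index_uniq //.
exact: yvar_ord.
Qed.

Section Blocks.
Variables (n : nat) (k : 'I_n -> nat).

Lemma offsetDS (i : 'I_n) :
  (offset k i + k i = \sum_(j < n | (j <= i)%N) k j)%N.
Proof.
rewrite (bigD1 i) //= addnC; congr (_ + _)%N; apply: eq_bigl => j.
by rewrite ltn_neqAle andbC.
Qed.

Lemma leq_sum_pred (A B : pred 'I_n) : subpred A B ->
  (\sum_(i | A i) k i <= \sum_(i | B i) k i)%N.
Proof.
move=> AB; rewrite [leqLHS]big_mkcond [leqRHS]big_mkcond /=.
apply: leq_sum => i _; case: (boolP (A i)) => [/AB -> //|_]; by case: (B i).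
Qed.

Lemma leq_offsetD_offset (i j : 'I_n) :
  (i < j)%N -> (offset k i + k i <= offset k j)%N.
Proof.
move=> ltij; rewrite offsetDS; apply: leq_sum_pred => l /= le_li.
exact: leq_ltn_trans le_li ltij.
Qed.

Lemma leq_offsetD_asize (i : 'I_n) : (offset k i + k i <= asize k)%N.
Proof. by rewrite offsetDS; apply: leq_sum_pred. Qed.

Lemma in_block_offset (i j : 'I_n) :
  (0 < k i)%N -> in_block k j (offset k i) = (j == i).
Proof.
move=> k_gt0; have lt_off : (offset k i < offset k i + k i)%N by rewrite -addn1 leq_add2l.
rewrite /in_block -val_eqE; case: (ltngtP j i) => [ltji|ltij|/val_inj ->].
- by rewrite ltnNge (leq_trans (leq_offsetD_offset ltji)) ?andbF.
- by rewrite leqNgt (leq_trans lt_off (leq_offsetD_offset ltij)).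
- by rewrite leqnn.
Qed.

Lemma pi0U t i : pi0 k U_(t)%MM i = in_block k i t.
Proof.
rewrite mnmE big_mkcond (bigD1 t) //= big1 ?addn0 => [|s /negbTE nst].
  by rewrite mnm1E eqxx; case: in_block.
by rewrite mnm1E eq_sym nst; case: in_block.
Qed.

Lemma pi0_sum_mulmn (I : finType) (F : I -> 'X_{1..asize k}) (c : I -> nat) :
  pi0 k (\sum_i F i *+ c i)%MM = (\sum_i pi0 k (F i) *+ c i)%MM.
Proof.
apply/mnmP => i; rewrite mnmE (@mnm_sumE n I i).
rewrite (eq_bigr (fun t => \sum_x (F x *+ c x)%MM t)%N); last first.
  by move=> t _; rewrite (@mnm_sumE (asize k) I).
rewrite exchange_big /=; apply: eq_bigr => x _.
by rewrite mulmnE mnmE big_distrl; apply: eq_bigr => t _; rewrite mulmnE.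
Qed.

Lemma comp_mpolyX_pi0 (K : comNzRingType) (w : 'X_{1..asize k}) :
  'X_[w] \mPo [tuple ('X_[pi0 k U_(t)] : {mpoly K[n]}) | t < asize k]
  = 'X_[pi0 k w].
Proof.
by rewrite comp_mpolyX_monomial {2}(multinomUE_id w) pi0_sum_mulmn.
Qed.

Lemma gammaE (K : comNzRingType) (P : {fset 'X_{1..n}})
    (p : {mpoly K[size (basis_seq_alpha P k)]}) :
  gamma p = p \mPo relabel K (basis_seq_alpha P k) (basis_seq P) (pi0 k).
Proof. by []. Qed.

Lemma pi0_mem_basis_seq P w :
  w \in basis_seq_alpha P k -> pi0 k w \in basis_seq P.
Proof. by case/imfsetP => b /= Bb ->. Qed.

End Blocks.

Section FirstLift.
Variables (n : nat) (k : 'I_n -> nat).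
Hypothesis k_gt0 : forall i, (0 < k i)%N.

Lemma offset_lt_asize (i : 'I_n) : (offset k i < asize k)%N.
Proof. by apply: leq_trans (leq_offsetD_asize k i); rewrite -addn1 leq_add2l. Qed.

Definition first_coord (i : 'I_n) : 'I_(asize k) := Ordinal (offset_lt_asize i).

Definition first_lift (u : 'X_{1..n}) : 'X_{1..asize k} :=
  (\sum_i U_(first_coord i) *+ u i)%MM.

Lemma pi0_first_lift u : pi0 k (first_lift u) = u.
Proof.
rewrite pi0_sum_mulmn {2}(multinomUE_id u); apply: eq_bigr => i _.
congr (_ *+ _)%MM; apply/mnmP => j.
by rewrite pi0U mnm1E in_block_offset // eq_sym.
Qed.

Lemma mdeg_first_lift u : mdeg (first_lift u) = mdeg u.
Proof.
rewrite mdeg_sum mdegE; apply: eq_bigr => i _.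
by rewrite mdegMn mdeg1 mul1n.
Qed.

Lemma first_lift_mem_basis_seq P u :
  u \in basis_seq P -> first_lift u \in basis_seq_alpha P k.
Proof.
move=> Bu; have lt_bound : (mdeg (first_lift u) < alpha_bound P)%N.
  by rewrite mdeg_first_lift ltnS (leq_bigmax_seq (F := fun u => mdeg u) _ Bu).
apply/imfsetP; exists (BMultinom lt_bound) => //=.
by rewrite unfold_in /= pi0_first_lift.
Qed.

End FirstLift.

Theorem lemma2p3 (K : fieldType) (n : nat) (P : {fset 'X_{1..n}})
    (k : 'I_n -> nat) :
  is_discrete_polymatroid P ->
  (forall i : 'I_n, (0 < k i)%N) ->
  (forall p : {mpoly K[size (basis_seq_alpha P k)]},
      toric_ideal (basis_seq_alpha P k) p ->
      toric_ideal (basis_seq P) (gamma p)) /\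
  (forall q : {mpoly K[size (basis_seq P)]},
      toric_ideal (basis_seq P) q ->
      exists2 p : {mpoly K[size (basis_seq_alpha P k)]},
        toric_ideal (basis_seq_alpha P k) p & gamma p = q).
Proof.
move=> _ k_gt0; split=> [p | q toric_q].
  rewrite gammaE; apply: (toric_ideal_relabel (@pi0_mem_basis_seq _ k P)) => w _.
  exact: comp_mpolyX_pi0.
exists (q \mPo relabel K (basis_seq P) (basis_seq_alpha P k) (first_lift k_gt0)).
  apply: (toric_ideal_relabel (@first_lift_mem_basis_seq _ _ k_gt0 P) _ toric_q).
  by move=> u _; apply: comp_mpolyX_monomial.
rewrite gammaE comp_relabel; last exact: first_lift_mem_basis_seq.
by rewrite comp_mpoly_relabel_id ?fset_uniq // => u _ /=; rewrite pi0_first_lift.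
Qed.
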